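(* Let $U=\big|\log\big(p_{\hat Y\mid A}(\hat Y\mid A)/p_{\hat Y}(\hat Y)\big)\big|$. For every $\delta\in(0,1]$, $\Pr(U>\epsilon_1)\le\delta$ where $$\epsilon_1=\frac{s^*}{\sqrt\delta}+\sup_{y\in\mathcal Y}\max\Big\{\gamma+\sum_{k=1}^d\log\Big(\frac{p_{\hat Y}(y)}{\inf_{a_k\in\mathcal A_k}p_{\hat Y\mid A_k}(y\mid a_k)}\Big),\ -\gamma+\sum_{k=1}^d\log\Big(\frac{\sup_{a_k\in\mathcal A_k}p_{\hat Y\mid A_k}(y\mid a_k)}{p_{\hat Y}(y)}\Big)\Big\},$$ with $s^*=(\sigma^{2/3}+\sigma_y^{2/3})^{3/2}$ and $\gamma=C(A)-C(A\mid\hat Y)$.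
   Context: Let $\hat Y$ take values in a finite set $\mathcal Y$ and let $A=(A_1,\dots,A_d)$ be a random vector, $A_k$ taking values in a finite set $\mathcal A_k$, $\mathcal A=\mathcal A_1\times\dots\times\mathcal A_d$; $(A,\hat Y)$ has joint law $p_{A,\hat Y}$. Write $p_V(v)=\Pr(V=v)$ and $p_{V\mid W}(v\mid w)=\Pr(V=v\mid W=w)$. Assume $p_{A,\hat Y}(a,y)>0$ for all $(a,y)\in\mathcal A\times\mathcal Y$. Define $L=\log\big(p_A(A)/\prod_{k} p_{A_k}(A_k)\big)$, $L_y=\log\big(p_{A\mid\hat Y}(A\mid\hat Y)/\prod_{k} p_{A_k\mid\hat Y}(A_k\mid\hat Y)\big)$, $C(A)=\mathbb E[L]$, $C(A\mid\hat Y)=\mathbb E[L_y]$, and $\sigma,\sigma_y$ the standard deviations of $L,L_y$. *)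

From HB Require Import structures.
From mathcomp Require Import all_boot all_order all_algebra.
From mathcomp Require Import all_classical all_reals all_analysis.
Set Implicit Arguments. Unset Strict Implicit. Unset Printing Implicit Defensive.
Import Order.TTheory GRing.Theory Num.Theory.
Local Open Scope ring_scope.

Section Info.
Variables (R : realType) (d : nat) (T : 'I_d -> finType) (Y : finType).
(* values of A = (A_1,...,A_d) *)
Notation AT := {dffun forall k : 'I_d, T k}.
(* joint law p_{A,Yhat}(a,y) *)
Variable p : AT -> Y -> R.

Definition is_joint_law := (forall a y, 0 <= p a y) /\ \sum_a \sum_y p a y = 1.

Definition pA (a : AT) : R := \sum_y p a y.
Definition pY (y : Y) : R := \sum_a p a y.
Definition pAk (k : 'I_d) (x : T k) : R := \sum_(a : AT | a k == x) \sum_y p a y.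
Definition pAkY (k : 'I_d) (x : T k) (y : Y) : R := \sum_(a : AT | a k == x) p a y.

Definition pY_A (y : Y) (a : AT) : R := p a y / pA a.
Definition pA_Y (a : AT) (y : Y) : R := p a y / pY y.
Definition pAk_Y (k : 'I_d) (x : T k) (y : Y) : R := pAkY x y / pY y.
Definition pY_Ak (y : Y) (k : 'I_d) (x : T k) : R := pAkY x y / pAk x.

Definition Ex (f : AT -> Y -> R) : R := \sum_a \sum_y p a y * f a y.
Definition Pr (P : AT -> Y -> bool) : R := \sum_a \sum_(y | P a y) p a y.

Definition Lrv (a : AT) (_ : Y) : R := ln (pA a / \prod_k pAk (a k)).
Definition Lyrv (a : AT) (y : Y) : R := ln (pA_Y a y / \prod_k pAk_Y (a k) y).

Definition CA : R := Ex Lrv.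
Definition CAY : R := Ex Lyrv.
Definition sigmaL : R := Num.sqrt (Ex (fun a y => (Lrv a y - CA) ^+ 2)).
Definition sigmaLy : R := Num.sqrt (Ex (fun a y => (Lyrv a y - CAY) ^+ 2)).

Definition Urv (a : AT) (y : Y) : R := `| ln (pY_A y a / pY y) |.

Definition sstar : R := (sigmaL `^ (2/3) + sigmaLy `^ (2/3)) `^ (3/2).
Definition gammaC : R := CA - CAY.

Definition eps1 (delta : R) : R :=
  sstar / Num.sqrt delta +
  sup [set Num.max
          (gammaC + \sum_k ln (pY y / inf [set pY_Ak y x | x in [set: T k]]))
          (- gammaC + \sum_k ln (sup [set pY_Ak y x | x in [set: T k]] / pY y))
       | y in [set: Y]].
End Info.

From HB Require Import structures.
From mathcomp Require Import all_boot all_order all_algebra.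
From mathcomp Require Import all_classical all_reals all_analysis.
From mathcomp Require Import ring lra.
Import Order.TTheory GRing.Theory Num.Theory.
Local Open Scope ring_scope.

(* Let W := (L_y - C(A|Y)) - (L - C(A)) ([centered_diff]).
   Since p(y|a)/p(y) = p(a,y)/(p(a) p(y)),
     log (p(y|a)/p(y)) = W - gamma + sum_k log (p(y|a_k)/p(y)),
   and bounding each summand by the sup or inf of p(y|.) over A_k gives
   U <= |W| + (the sup term of eps1).  Minkowski's inequality gives
   E[W^2] <= (sigma + sigma_y)^2 <= s*^2, and Chebyshev's inequality bounds
   Pr(|W| > s*/sqrt delta) by delta. *)

Section Expectation.
Context {R : realType} {d : nat} {T : 'I_d -> finType} {Y : finType}.
Context {p : {dffun forall k : 'I_d, T k} -> Y -> R}.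
Hypothesis p_gt0 : forall a y, 0 < p a y.

Lemma Ex_ext f g : (forall a y, f a y = g a y) -> Ex p f = Ex p g.
Proof. by move=> fg; apply: eq_bigr => a _; apply: eq_bigr => y _; rewrite fg. Qed.

Lemma Ex_eq0 f : (forall a y, f a y = 0) -> Ex p f = 0.
Proof. by move=> f0; apply: big1 => a _; apply: big1 => y _; rewrite f0 mulr0. Qed.

Lemma ExD f g : Ex p (fun a y => f a y + g a y) = Ex p f + Ex p g.
Proof.
rewrite /Ex -big_split /=; apply: eq_bigr => a _.
by rewrite -big_split /=; apply: eq_bigr => y _; rewrite mulrDr.
Qed.

Lemma ExZ c f : Ex p (fun a y => c * f a y) = c * Ex p f.
Proof.
rewrite /Ex mulr_sumr; apply: eq_bigr => a _.
by rewrite mulr_sumr; apply: eq_bigr => y _; rewrite mulrCA.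
Qed.

Lemma ler_Ex f g : (forall a y, f a y <= g a y) -> Ex p f <= Ex p g.
Proof.
move=> fg; apply: ler_sum => a _; apply: ler_sum => y _.
by rewrite ler_wpM2l // ltW.
Qed.

Lemma Ex_sqr_ge0 f : 0 <= Ex p (fun a y => f a y ^+ 2).
Proof.
apply: sumr_ge0 => a _; apply: sumr_ge0 => y _.
by rewrite mulr_ge0 ?sqr_ge0 // ltW.
Qed.

Lemma Ex_sqr_eq0 f : Ex p (fun a y => f a y ^+ 2) = 0 -> forall a y, f a y = 0.
Proof.
have term_ge0 a y : 0 <= p a y * f a y ^+ 2 by rewrite mulr_ge0 ?sqr_ge0 // ltW.
move=> E0 a y.
have row0 : \sum_y p a y * f a y ^+ 2 = 0.
  by apply: (psumr_eq0P _ E0) => // a' _; apply: sumr_ge0.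
move: (psumr_eq0P (fun y' _ => term_ge0 a y') row0 (i := y) isT) => /eqP.
by rewrite mulf_eq0 gt_eqF //= sqrf_eq0 => /eqP.
Qed.

Lemma sqrt_Ex_sqr_eq0 f :
  Num.sqrt (Ex p (fun a y => f a y ^+ 2)) = 0 -> forall a y, f a y = 0.
Proof.
move=> /eqP; rewrite sqrtr_eq0 => E_le0; apply: Ex_sqr_eq0.
by apply/eqP; rewrite eq_le E_le0 Ex_sqr_ge0.
Qed.

Lemma Ex_mul_le_sqrt f g :
  Ex p (fun a y => f a y * g a y) <=
  Num.sqrt (Ex p (fun a y => f a y ^+ 2)) * Num.sqrt (Ex p (fun a y => g a y ^+ 2)).
Proof.
set a := Num.sqrt _; set b := Num.sqrt _.
have a_ge0 : 0 <= a := sqrtr_ge0 _; have b_ge0 : 0 <= b := sqrtr_ge0 _.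
have [a0|a_neq0] := eqVneq a 0.
  by rewrite Ex_eq0 ?mulr_ge0 // => x y; rewrite (sqrt_Ex_sqr_eq0 _ a0) mul0r.
have [b0|b_neq0] := eqVneq b 0.
  by rewrite Ex_eq0 ?mulr_ge0 // => x y; rewrite (sqrt_Ex_sqr_eq0 _ b0) mulr0.
have ab_gt0 : 0 < a * b by rewrite mulr_gt0 // lt_neqAle eq_sym ?a_neq0 ?b_neq0.
have amgm : Ex p (fun x y => (2 * a * b) * (f x y * g x y)) <=
            Ex p (fun x y => b ^+ 2 * f x y ^+ 2 + a ^+ 2 * g x y ^+ 2).
  apply: ler_Ex => x y; rewrite -subr_ge0.
  have -> : b ^+ 2 * f x y ^+ 2 + a ^+ 2 * g x y ^+ 2 - 2 * a * b * (f x y * g x y)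
      = (b * f x y - a * g x y) ^+ 2 by ring.
  exact: sqr_ge0.
have Ef2 : Ex p (fun x y => f x y ^+ 2) = a ^+ 2 by rewrite sqr_sqrtr ?Ex_sqr_ge0.
have Eg2 : Ex p (fun x y => g x y ^+ 2) = b ^+ 2 by rewrite sqr_sqrtr ?Ex_sqr_ge0.
rewrite ExD !ExZ Ef2 Eg2 in amgm.
move: amgm; set E := Ex p _ => amgm; nra.
Qed.

Lemma Ex_sqrB_le f g :
  Ex p (fun a y => (f a y - g a y) ^+ 2) <=
  (Num.sqrt (Ex p (fun a y => f a y ^+ 2)) + Num.sqrt (Ex p (fun a y => g a y ^+ 2))) ^+ 2.
Proof.
have expand : Ex p (fun a y => (f a y - g a y) ^+ 2) =
    Ex p (fun a y => f a y ^+ 2) + Ex p (fun a y => g a y ^+ 2)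
    + 2 * Ex p (fun a y => f a y * - g a y).
  by rewrite -ExZ -!ExD; apply: Ex_ext => a y; ring.
have CS := Ex_mul_le_sqrt f (fun a y => - g a y).
rewrite (@Ex_ext (fun a y => (- g a y) ^+ 2) (fun a y => g a y ^+ 2)) in CS;
  last by move=> a y; rewrite sqrrN.
rewrite expand sqrrD !sqr_sqrtr ?Ex_sqr_ge0 //; lra.
Qed.

Lemma ler_Pr (P Q : _ -> _ -> bool) :
  (forall a y, P a y -> Q a y) -> Pr p P <= Pr p Q.
Proof.
move=> PQ; apply: ler_sum => a _; rewrite [leLHS]big_mkcond [leRHS]big_mkcond.
apply: ler_sum => y _; case: ifP => [/PQ -> //|_].
by case: ifP => _ //; exact: ltW.
Qed.

Lemma Pr_norm_gt_le (f : _ -> _ -> R) (t : R) : 0 < t ->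
  Pr p (fun a y => t < `|f a y|) <= Ex p (fun a y => f a y ^+ 2) / t ^+ 2.
Proof.
move=> t_gt0; rewrite mulrC -ExZ.
apply: ler_sum => a _; rewrite big_mkcond; apply: ler_sum => y _.
have t2_gt0 : 0 < t ^+ 2 by rewrite exprn_gt0.
case: ifP => [t_lt|_].
  rewrite -[leLHS]mulr1 ler_wpM2l ?(ltW (p_gt0 a y)) // mulrC ler_pdivlMr // mul1r.
  rewrite -[f a y ^+ 2]real_normK ?num_real //.
  by rewrite lerXn2r ?nnegrE ?normr_ge0 ?(ltW t_gt0) ?(ltW t_lt).
by rewrite mulr_ge0 ?(ltW (p_gt0 a y)) // mulr_ge0 ?sqr_ge0 // invr_ge0 ltW.
Qed.

Lemma Pr_norm_gt_le_delta (f : _ -> _ -> R) (s delta : R) : 0 <= s -> 0 < delta ->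
  Ex p (fun a y => f a y ^+ 2) <= s ^+ 2 ->
  Pr p (fun a y => s / Num.sqrt delta < `|f a y|) <= delta.
Proof.
move=> s_ge0 delta_gt0 Ef2; have [s0|s_neq0] := eqVneq s 0.
  have f0 : forall a y, f a y = 0.
    apply: Ex_sqr_eq0; apply/eqP; rewrite eq_le Ex_sqr_ge0 andbT.
    by rewrite s0 expr0n in Ef2.
  rewrite [Pr _ _]big1 ?ltW // => a _; apply: big1 => y.
  by rewrite f0 s0 normr0 mul0r ltxx.
have s_gt0 : 0 < s by rewrite lt_neqAle eq_sym s_neq0.
have t_gt0 : 0 < s / Num.sqrt delta by rewrite divr_gt0 ?sqrtr_gt0.
apply: le_trans (Pr_norm_gt_le f _ t_gt0) _.
rewrite expr_div_n sqr_sqrtr ?(ltW delta_gt0) // invf_div mulrCA.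
by rewrite ger_pMr // ler_pdivrMr ?exprn_gt0 // mul1r.
Qed.
End Expectation.

Lemma powR32 (R : realType) (x : R) : 0 <= x -> x `^ (3/2) = x * Num.sqrt x.
Proof.
move=> x_ge0; have -> : (3/2 : R) = 1 + 2^-1 by lra.
rewrite powRD ?powRr1 ?powR12_sqrt //.
by rewrite gt_eqF //; lra.
Qed.

(* superadditivity of x `^ (3/2), applied to s1 `^ (2/3) and s2 `^ (2/3) *)
Lemma addr_le_powR23 (R : realType) (s1 s2 : R) : 0 <= s1 -> 0 <= s2 ->
  s1 + s2 <= (s1 `^ (2/3) + s2 `^ (2/3)) `^ (3/2).
Proof.
have powR23K (s : R) : 0 <= s -> (s `^ (2/3)) `^ (3/2) = s.
  by move=> s_ge0; rewrite -powRrM (_ : 2/3 * (3/2) = 1) ?powRr1 //; lra.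
move=> s1_ge0 s2_ge0; rewrite -{1}(powR23K _ s1_ge0) -{1}(powR23K _ s2_ge0).
have := powR_ge0 s1 (2/3); have := powR_ge0 s2 (2/3).
move: (s1 `^ _) (s2 `^ _) => u v v_ge0 u_ge0.
rewrite !powR32 ?addr_ge0 // mulrDl.
by apply: lerD; apply: ler_wpM2l => //; rewrite ler_sqrt ?addr_ge0 // ?lerDl ?lerDr.
Qed.

Section FiniteImage.
Context {R : realType} {I : finType}.

Lemma le_sup_fin_img (f : I -> R) i : f i <= sup [set f j | j in [set: I]].
Proof.
apply: ub_le_sup; last by exists i.
exists (\sum_j `|f j|) => _ [j _ <-].
by rewrite (le_trans (ler_norm _)) // (bigD1 j) //= lerDl sumr_ge0.
Qed.

Lemma ge_inf_fin_img (f : I -> R) i : (forall j, 0 < f j) ->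
  inf [set f j | j in [set: I]] <= f i.
Proof.
by move=> f_gt0; apply: ge_inf; [exists 0 => _ [j _ <-]; exact: ltW | exists i].
Qed.

Lemma inf_fin_img_gt0 (f : I -> R) (i : I) : (forall j, 0 < f j) ->
  0 < inf [set f j | j in [set: I]].
Proof.
move=> f_gt0; have min_gt0 : 0 < \big[Order.min/1]_j f j.
  by apply: (big_ind (fun v : R => 0 < v)) => // u v u_gt0 v_gt0; rewrite lt_min u_gt0.
apply: (lt_le_trans min_gt0); apply: lb_le_inf; first by exists (f i), i.
by move=> _ [j _ <-]; rewrite (bigD1 j) //= ge_min lexx.
Qed.

Lemma ln_prod (F : I -> R) : (forall i, 0 < F i) -> ln (\prod_i F i) = \sum_i ln (F i).
Proof.
move=> F_gt0; suff [] : 0 < \prod_i F i /\ ln (\prod_i F i) = \sum_i ln (F i) by [].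
apply: (big_ind2 (fun u v => 0 < u /\ ln u = v)); first by rewrite ln1.
  by move=> u1 v1 u2 v2 [u1_gt0 <-] [u2_gt0 <-]; rewrite mulr_gt0 // lnM.
by move=> i _; rewrite F_gt0.
Qed.

Lemma psumr_gt0 i (P : pred I) (F : I -> R) :
  (forall j, 0 <= F j) -> P i -> 0 < F i -> 0 < \sum_(j | P j) F j.
Proof.
move=> F_ge0 Pi Fi_gt0; rewrite (bigD1 i) //=.
by rewrite (lt_le_trans Fi_gt0) // lerDl sumr_ge0.
Qed.
End FiniteImage.

Section InformationDensity.
Context {R : realType} {d : nat} {T : 'I_d -> finType} {Y : finType}.
Local Notation AT := {dffun forall k : 'I_d, T k}.
Context {p : AT -> Y -> R}.
Hypothesis p_gt0 : forall a y, 0 < p a y.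

Lemma pA_gt0 (y0 : Y) a : 0 < pA p a.
Proof. by apply: (psumr_gt0 y0) => // y; exact: ltW. Qed.

Lemma pY_gt0 (a0 : AT) y : 0 < pY p y.
Proof. by apply: (psumr_gt0 a0) => // a; exact: ltW. Qed.

Lemma exists_dffun_at (a0 : AT) {k} (x : T k) : exists a : AT, a k = x.
Proof. by exists (finfun (dfwith (fun j => a0 j) k x)); rewrite ffunE dfwithin. Qed.

Lemma pAkY_gt0 (a0 : AT) {k} (x : T k) y : 0 < pAkY p x y.
Proof.
have [a ak] := exists_dffun_at a0 x.
by apply: (psumr_gt0 a); rewrite ?ak // => a'; exact: ltW.
Qed.

Lemma pAk_gt0 (a0 : AT) (y0 : Y) {k} (x : T k) : 0 < pAk p x.
Proof.
have [a ak] := exists_dffun_at a0 x.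
apply: (psumr_gt0 a); rewrite ?ak ?(pA_gt0 y0) // => a'.
by apply: sumr_ge0 => y _; exact: ltW.
Qed.

Lemma pY_Ak_gt0 (a0 : AT) {k} (x : T k) y : 0 < pY_Ak p y x.
Proof. by rewrite divr_gt0 ?(pAkY_gt0 a0) ?(pAk_gt0 a0 y). Qed.

Lemma ln_pY_A_div_pY (a : AT) (y : Y) : ln (pY_A p y a / pY p y) =
  Lyrv p a y - Lrv p a y + \sum_k ln (pY_Ak p y (a k) / pY p y).
Proof.
have pY_pos := pY_gt0 a y; have pA_pos := pA_gt0 y a.
have pAkY_pos k (x : T k) := pAkY_gt0 a x y; have pAk_pos k (x : T k) := pAk_gt0 a y x.
have pAk_Y_pos k (x : T k) : 0 < pAkY p x y / pY p y by rewrite divr_gt0.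
rewrite /Lyrv /Lrv /pY_A /pA_Y /pY_Ak /pAk_Y.
rewrite !ln_div ?posrE ?divr_gt0 ?prodr_gt0 // !ln_prod //.
under eq_bigr => k _ do rewrite ln_div ?posrE //.
under [X in _ = _ + X]eq_bigr => k _ do rewrite !ln_div ?posrE ?divr_gt0 //.
by rewrite !sumrB; ring.
Qed.

Lemma sum_ln_pY_Ak_le_sup (a : AT) (y : Y) :
  \sum_k ln (pY_Ak p y (a k) / pY p y) <=
  \sum_k ln (sup [set pY_Ak p y x | x in [set: T k]] / pY p y).
Proof.
apply: ler_sum => k _; have pYy := pY_gt0 a y; have pYAk := pY_Ak_gt0 a (a k) y.
have le_sup := le_sup_fin_img (fun x => pY_Ak p y x) (a k).
have sup_gt0 := lt_le_trans pYAk le_sup.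
rewrite ler_ln ?posrE ?(divr_gt0 pYAk pYy) ?(divr_gt0 sup_gt0 pYy) //.
by rewrite ler_wpM2r // invr_ge0 ltW.
Qed.

Lemma oppr_sum_ln_pY_Ak_le_inf (a : AT) (y : Y) :
  - \sum_k ln (pY_Ak p y (a k) / pY p y) <=
  \sum_k ln (pY p y / inf [set pY_Ak p y x | x in [set: T k]]).
Proof.
rewrite -sumrN; apply: ler_sum => k _.
have pAk_pos := fun x : T k => pY_Ak_gt0 a x y.
have inf_gt0 := inf_fin_img_gt0 _ (a k) pAk_pos.
have inf_le := ge_inf_fin_img _ (a k) pAk_pos.
have pYy := pY_gt0 a y.
rewrite [ln (_ / pY p y)]ln_div ?posrE // [ln (pY p y / _)]ln_div ?posrE //.
by rewrite opprB lerD2l lerN2 ler_ln ?posrE.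
Qed.
End InformationDensity.

Lemma normr_addB_le_max (R : realType) (w g s S1 S2 : R) : - s <= S1 -> s <= S2 ->
  `|w - g + s| <= `|w| + Num.max (g + S1) (- g + S2).
Proof.
move=> lo up; have := ler_norm w; have := ler_norm (- w); rewrite normrN.
have := le_max (g + S1) (g + S1) (- g + S2); have := le_max (- g + S2) (g + S1) (- g + S2).
rewrite !lexx orbT /= => max2 max1 Nw_le w_le.
by rewrite ler_norml; apply/andP; split; lra.
Qed.

Section Deviation.
Context {R : realType} {d : nat} {T : 'I_d -> finType} {Y : finType}.
Variable p : {dffun forall k : 'I_d, T k} -> Y -> R.
Hypothesis p_gt0 : forall a y, 0 < p a y.

Definition centered_diff a y : R := (Lyrv p a y - CAY p) - (Lrv p a y - CA p).

Definition eps1_term y : R := Num.max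
  (gammaC p + \sum_k ln (pY p y / inf [set pY_Ak p y x | x in [set: T k]]))
  (- gammaC p + \sum_k ln (sup [set pY_Ak p y x | x in [set: T k]] / pY p y)).

Lemma eps1E delta :
  eps1 p delta = sstar p / Num.sqrt delta + sup [set eps1_term y | y in [set: Y]].
Proof. by []. Qed.

Lemma Urv_le a y : Urv p a y <= `|centered_diff a y| + eps1_term y.
Proof.
rewrite /Urv ln_pY_A_div_pY //.
have -> : Lyrv p a y - Lrv p a y = centered_diff a y - gammaC p.
  by rewrite /centered_diff /gammaC; ring.
apply: normr_addB_le_max.
- exact: oppr_sum_ln_pY_Ak_le_inf.
- exact: sum_ln_pY_Ak_le_sup.
Qed.

Lemma Ex_centered_diff_sqr_le : Ex p (fun a y => centered_diff a y ^+ 2) <= sstar p ^+ 2.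
Proof.
have sum_ge0 : 0 <= sigmaL p + sigmaLy p by rewrite addr_ge0 ?sqrtr_ge0.
apply: (le_trans (Ex_sqrB_le p_gt0 _ _)); rewrite addrC -/(sigmaL p) -/(sigmaLy p).
by rewrite lerXn2r ?nnegrE ?(le_trans sum_ge0) ?addr_le_powR23 ?sqrtr_ge0.
Qed.
End Deviation.

Theorem mainTheorem4 (R : realType) (d : nat) (T : 'I_d -> finType) (Y : finType)
  (p : {dffun forall k : 'I_d, T k} -> Y -> R)
  (hlaw : is_joint_law p)
  (hpos : forall a y, 0 < p a y)
  (delta : R) (hdelta0 : 0 < delta) (hdelta1 : delta <= 1) :
  Pr p (fun a y => Urv p a y > eps1 p delta) <= delta.
Proof.
apply: le_trans (Pr_norm_gt_le_delta hpos _ (sstar p) _ (powR_ge0 _ _) hdelta0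
                   (Ex_centered_diff_sqr_le p hpos)).
apply: (ler_Pr hpos) => a y; rewrite eps1E => lt_U.
have := Urv_le p hpos a y; have := le_sup_fin_img (eps1_term p) y.
lra.
Qed.
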